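(* Let $\mathcal D$ be a non-trivial $2$-$(k^{2},k,\lambda)$ design with $\lambda\mid k$ and $G$ a flag-transitive automorphism group which is almost simple with socle $X$. Then for every point $x$ and every point $y\neq x$, the integer $\frac{k+1}{\gcd(k+1,|\mathrm{Out}(X)|)}$ divides $|y^{X_x}|$, and hence divides $|X_x|$.
   Context: A $2$-$(v,k,\lambda)$ design: $v$ points, blocks are $k$-subsets, every two distinct points lie in exactly $\lambda$ blocks; non-trivial: $2<k<v$. Flag-transitive: transitive on incident point–block pairs. $G$ almost simple with socle $X$ means $X\trianglelefteq G\le\mathrm{Aut}(X)$ with $X$ non-abelian simple. $X_x$ is the stabilizer in $X$ of the point $x$, $y^{X_x}$ the orbit of $y$ under $X_x$, $\mathrm{Out}(X)=\mathrm{Aut}(X)/\mathrm{Inn}(X)$. *)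

From mathcomp Require Import all_boot all_fingroup all_solvable.
Set Implicit Arguments. Unset Strict Implicit. Unset Printing Implicit Defensive.
Local Open Scope group_scope.

Definition Inn (gT : finGroupType) (X : {set gT}) : {set {perm gT}} :=
  [set a in Aut X | [exists x in X, [forall y in X, a y == y ^ x]]].

Definition out_order (gT : finGroupType) (X : {set gT}) : nat :=
  #|Aut X| %/ #|Inn X|.

Definition is_2design (T : finType) (B : {set {set T}}) (k lambda : nat) :=
  (forall b, b \in B -> #|b| = k) /\
  (forall x y : T, x != y -> #|[set b in B | (x \in b) && (y \in b)]| = lambda).

Definition design_aut (T : finType) (B : {set {set T}}) (G : {set {perm T}}) :=
  forall g, g \in G -> forall b, b \in B -> [set g z | z in b] \in B.

Definition flag_transitive (T : finType) (B : {set {set T}}) (G : {set {perm T}}) :=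
  forall x b x' b', b \in B -> x \in b -> b' \in B -> x' \in b' ->
    exists2 g, g \in G & g x = x' /\ [set g z | z in b] = b'.

(* G is almost simple with socle X: X is a non-abelian simple normal
   subgroup of G with trivial centraliser in G, i.e. X <| G <= Aut(X)
   via the conjugation action. *)
Definition almost_simple_socle (gT : finGroupType) (G X : {group gT}) :=
  [/\ X <| G, simple X, ~~ abelian X & 'C_G(X) = 1].

From mathcomp Require Import all_boot all_fingroup all_solvable.
Set Implicit Arguments. Unset Strict Implicit. Unset Printing Implicit Defensive.
Local Open Scope group_scope.

(* Let H = G_x and K = X_x = H :&: X. By flag-transitivity every block through
   x meets the orbit y^H in the same number of points, so counting incidences,
   r = (k + 1) lambda blocks through x give k + 1 | |y^H|. As K is normal in H,
   |y^H| = |y^K| |H : K H_y|, and this index divides |H : K| = |HX : X|, hence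
   |G : X|, hence |Out(X)|, since G embeds in Aut(X) and Inn(X) ~ X. So only
   the part of k + 1 shared with |Out(X)| can fail to divide |y^K|. *)

Definition blocks_at (T : finType) (B : {set {set T}}) (x : T) := [set b in B | x \in b].

Lemma double_count (T : finType) (Bs : {set {set T}}) (D : {set T}) :
  (\sum_(b in Bs) #|b :&: D| = \sum_(z in D) #|[set b in Bs | z \in b]|)%N.
Proof.
have card_sum (U : finType) (A : {set U}) (P : pred U) :
    #|[set u in A | P u]| = (\sum_(u in A) P u)%N.
  rewrite -sum1_card big_mkcond [RHS]big_mkcond /=.
  by apply: eq_bigr => u _; rewrite inE; case: (u \in A); case: (P u).
transitivity (\sum_(b in Bs) \sum_(z in D) (z \in b) : nat)%N.
  apply: eq_bigr => b _; rewrite -card_sum; apply: eq_card => z.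
  by rewrite !inE andbC.
by rewrite exchange_big; apply: eq_bigr => z _; rewrite card_sum.
Qed.

Section FlagTransitiveSquareDesign.
Variables (T : finType) (B : {set {set T}}) (k lambda : nat).
Hypothesis design : is_2design B k lambda.

Lemma card_blocks_at_pair x z :
  z != x -> #|[set b in blocks_at B x | z \in b]| = lambda.
Proof.
move=> zx; rewrite -(design.2 x z) 1?eq_sym //.
by apply: eq_card => b; rewrite !inE andbA.
Qed.

Lemma sum_card_meet_blocks_at x (D : {set T}) :
  x \notin D -> (\sum_(b in blocks_at B x) #|b :&: D| = #|D| * lambda)%N.
Proof.
move=> xD; rewrite double_count -sum_nat_const; apply: eq_bigr => z zD.
by apply: card_blocks_at_pair; apply: contraNneq xD => <-.
Qed.

Lemma replication_number x :
  (#|blocks_at B x| * (k - 1) = (#|T| - 1) * lambda)%N.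
Proof.
have x_notin : x \notin [set~ x] by rewrite setC11.
rewrite (subn1 #|T|) -(cardsC1 x) -(sum_card_meet_blocks_at x_notin) -sum_nat_const.
apply: eq_bigr => b; rewrite inE => /andP[bB xb].
by rewrite -setDE -(design.1 b bB) (cardsD1 x b) xb add1n subn1.
Qed.

Hypotheses (v_eq : #|T| = (k ^ 2)%N) (k_gt1 : (1 < k)%N) (lambda_gt0 : (0 < lambda)%N).

Lemma card_blocks_at x : #|blocks_at B x| = (k.+1 * lambda)%N.
Proof.
have k1_gt0 : (0 < k - 1)%N by rewrite subn_gt0.
apply/eqP; rewrite -(eqn_pmul2r k1_gt0) replication_number v_eq.
by rewrite -{2}(exp1n 2) subn_sqr addn1 (mulnC (k - 1)) mulnAC.
Qed.

Lemma dvdn_card_uniform_meet x (D : {set T}) :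
  x \notin D -> {in blocks_at B x &, forall b1 b2, #|b1 :&: D| = #|b2 :&: D|} ->
  k.+1 %| #|D|.
Proof.
move=> xD uniform.
have [b0 b0x] : {b0 | b0 \in blocks_at B x}.
  by apply/sigW/card_gt0P; rewrite card_blocks_at muln_gt0 lambda_gt0.
have := sum_card_meet_blocks_at xD.
rewrite (eq_bigr _ (fun b bx => uniform b b0 bx b0x)) sum_nat_const card_blocks_at mulnAC.
by move/eqP; rewrite eqn_pmul2r // => /eqP <-; apply: dvdn_mulr.
Qed.

Variable G : {group {perm T}}.
Hypothesis flag_tr : flag_transitive B G.

Lemma leq_card_meet_stab_orbit x y b1 b2 :
  b1 \in blocks_at B x -> b2 \in blocks_at B x ->
  (#|b1 :&: orbit 'P 'C_G[x | 'P] y| <= #|b2 :&: orbit 'P 'C_G[x | 'P] y|)%N.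
Proof.
rewrite !inE => /andP[b1B xb1] /andP[b2B xb2].
have [g gG [gx <-]] := flag_tr b1B xb1 b2B xb2.
have gHx : g \in 'C_G[x | 'P] by rewrite inE gG; apply/astab1P.
rewrite -(card_imset _ (@perm_inj _ g)); apply: subset_leq_card.
apply/subsetP => _ /imsetP[z /setIP[zb zD] ->].
rewrite inE imset_f //= -apermE.
by rewrite (actsP (acts_orbit 'P y (subsetT _))).
Qed.

Lemma dvdn_card_stab_orbit x y :
  y != x -> k.+1 %| #|orbit 'P 'C_G[x | 'P] y|.
Proof.
move=> yx; apply: (@dvdn_card_uniform_meet x).
  rewrite orbit_sym; apply/orbitP => -[g /setIP[_ /astab1P gx] gxy].
  by move: yx; rewrite -gxy gx eqxx.
by move=> b1 b2 b1x b2x; apply/eqP; rewrite eqn_leq !leq_card_meet_stab_orbit.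
Qed.

End FlagTransitiveSquareDesign.

Section OuterAutomorphisms.
Variable gT : finGroupType.
Implicit Types G H X : {group gT}.

Lemma card_morphim_conj_aut X H :
  H \subset 'N(X) -> #|conj_aut X @* H| = #|H : 'C_H(X)|.
Proof. by move=> nXH; rewrite card_morphim ker_conj_aut (setIidPr nXH) indexgI. Qed.

Lemma Inn_conj_aut X : Inn X = conj_aut X @* X.
Proof.
have conj_Aut g : g \in X -> conj_aut X g \in Aut X.
  by move=> gX; rewrite (subsetP (Aut_conj_aut X X)) // mem_morphim // (subsetP (normG X)).
rewrite morphimEsub ?normG //; apply/setP => a; rewrite inE.
apply/andP/imsetP => [[aAut /existsP[g /andP[gX /forallP a_conj]]] | [g gX ->]].
  exists g => //; apply: eq_Aut aAut (conj_Aut g gX) _ => z zX.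
  by rewrite conj_autE //; apply/eqP; have := a_conj z; rewrite zX.
split; first exact: conj_Aut.
by apply/existsP; exists g; rewrite gX; apply/forallP => z; apply/implyP => zX; rewrite conj_autE.
Qed.

Lemma card_Inn X : 'Z(X) = 1 -> #|Inn X| = #|X|.
Proof.
by move=> ZX1; rewrite Inn_conj_aut card_morphim_conj_aut ?normG // -/'Z(X) ZX1 indexg1.
Qed.

Lemma index_dvd_out_order G X :
  X <| G -> 'C_G(X) = 1 -> (#|G : X| %| out_order X)%N.
Proof.
case/andP=> sXG nXG CGX1.
have ZX1 : 'Z(X) = 1 by apply/trivgP; rewrite -CGX1 setSI.
have dvd_G_Aut : (#|G| %| #|Aut X|)%N.
  by rewrite -(indexg1 G) -CGX1 -card_morphim_conj_aut // cardSg ?Aut_conj_aut.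
rewrite /out_order card_Inn // -divgS // dvdn_divRL ?divnK ?cardSg //.
exact: dvdn_trans (cardSg sXG) dvd_G_Aut.
Qed.

End OuterAutomorphisms.

Lemma card_orbit_normal (aT : finGroupType) (rT : finType) (to : {action aT &-> rT})
    (H K : {group aT}) (y : rT) :
  K <| H -> #|orbit to H y| = (#|orbit to K y| * #|H : K <*> 'C_H[y | to]|)%N.
Proof.
case/andP=> sKH nKH; rewrite !card_orbit.
have nKHy : 'C_H[y | to] \subset 'N(K) := subset_trans (subsetIl _ _) nKH.
have sKHy : K <*> 'C_H[y | to] \subset H by rewrite join_subG sKH subsetIl.
rewrite -(Lagrange_index sKHy (joing_subr K _)) mulnC; congr (_ * _)%N.
by rewrite /= joingC norm_joinEl // indexMg -indexgI setIA (setIidPl sKH) indexgI.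
Qed.

Lemma index_setI_dvd_normal (gT : finGroupType) (G H X : {group gT}) :
  H \subset G -> X <| G -> (#|H : H :&: X| %| #|G : X|)%N.
Proof.
move=> sHG /andP[sXG nXG]; rewrite indexgI -indexMg -norm_joinEr.
  by apply: (indexSg (joing_subl X H)); rewrite join_subG sXG.
exact: subset_trans sHG nXG.
Qed.

Lemma divn_gcd_dvd n a i o :
  (0 < n -> n %| a * i -> i %| o -> n %/ gcdn n o %| a)%N.
Proof.
move=> n_gt0 n_ai i_o; have g_gt0 : (0 < gcdn n o)%N by rewrite gcdn_gt0 n_gt0.
rewrite -(dvdn_pmul2r g_gt0) divnK ?dvdn_gcdl // muln_gcdr dvdn_gcd dvdn_mull //=.
exact: dvdn_trans n_ai (dvdn_mul (dvdnn a) i_o).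
Qed.

Theorem lemma3p5 (T : finType) (B : {set {set T}}) (k lambda : nat)
  (G X : {group {perm T}}) :
  (#|T| = k ^ 2)%N -> (2 < k)%N -> (k < #|T|)%N ->
  is_2design B k lambda -> (lambda %| k)%N ->
  design_aut B G -> flag_transitive B G ->
  almost_simple_socle G X ->
  forall x y : T, y != x ->
    let d := (k.+1 %/ gcdn k.+1 (out_order X))%N in
    (d %| #|orbit 'P 'C_X[x | 'P] y|)%N /\ (d %| #|'C_X[x | 'P]|)%N.
Proof.
move=> v_eq k_gt2 _ design lambda_dvd _ flag_tr [nXG _ _ CGX1] x y yx d.
have lambda_gt0 : (0 < lambda)%N := dvdn_gt0 (ltnW (ltnW k_gt2)) lambda_dvd.
have XxE : 'C_X[x | 'P] = 'C_G[x | 'P] :&: X.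
  by rewrite setIAC (setIidPr (normal_sub nXG)).
have nXxGx : 'C_X[x | 'P] <| 'C_G[x | 'P].
  by rewrite XxE; apply: normalGI (subsetIl _ _) nXG.
have dvd_orbit_Gx := dvdn_card_stab_orbit design v_eq (ltnW k_gt2) lambda_gt0 flag_tr yx.
rewrite (card_orbit_normal 'P y nXxGx) in dvd_orbit_Gx.
have dvd_index_out : (#|'C_G[x | 'P] : 'C_X[x | 'P] <*> 'C_('C_G[x | 'P])[y | 'P]|
                       %| out_order X)%N.
  have index_Gx_Xx : (#|'C_G[x | 'P] : 'C_X[x | 'P]| %| #|G : X|)%N.
    by rewrite XxE; apply: index_setI_dvd_normal (subsetIl _ _) nXG.
  apply: dvdn_trans (indexgS _ (joing_subl _ _)) _.
  exact: dvdn_trans index_Gx_Xx (index_dvd_out_order nXG CGX1).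
have d_orbit := divn_gcd_dvd (ltn0Sn k) dvd_orbit_Gx dvd_index_out.
by split=> //; apply: dvdn_trans d_orbit (dvdn_orbit _ _ _).
Qed.
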